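(* Let $n \geq 2$, $N = \frac{n(n+1)}{2}$, and identify $\mathbb{C}^N$ with arrays $v = (v_{r,s})_{1 \leq s \leq r \leq n}$ of complex numbers. Let $\mathbb{C}^N_{\mathrm{std}}$ be the set of standard points and $\mathbb{Z}^N_0$ the set of integral vectors whose row-$n$ entries vanish (see context). Let $W \subset \mathbb{Z}^N_0$ be a nonempty finite set and put $$S_W = \bigcap_{w \in W} \left(\mathbb{C}^N_{\mathrm{std}} - w\right), \qquad \text{where } \mathbb{C}^N_{\mathrm{std}} - w = \{v - w \mid v \in \mathbb{C}^N_{\mathrm{std}}\}.$$ Let $F \in \mathbb{C}(\lambda_{r,s} \mid 1 \leq s \leq r \leq n)$ be a rational function that has no poles in $S_W$. If $F(v) = 0$ for all $v \in S_W$, then $F = 0$.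
   Context: Coordinates on $\mathbb{C}^N$ are the variables $\lambda_{r,s}$, $1 \leq s \leq r \leq n$, so that $\lambda_{r,s}(v) = v_{r,s}$; rational functions on $\mathbb{C}^N$ are elements of the field $\mathbb{C}(\lambda_{r,s} \mid 1 \leq s \leq r \leq n)$. A point $v \in \mathbb{C}^N$ is called standard if for all $1 \leq i < k \leq n$ one has $v_{k,i} - v_{k-1,i} \in \mathbb{Z}_{\geq 0}$ and $v_{k-1,i} - v_{k,i+1} \in \mathbb{Z}_{>0}$; $\mathbb{C}^N_{\mathrm{std}}$ denotes the set of standard points. $\mathbb{Z}^N_0$ denotes the set of $z \in \mathbb{Z}^N$ with $z_{n,s} = 0$ for all $1 \leq s \leq n$. *)

From HB Require Import structures.
From mathcomp Require Import all_boot all_order all_algebra.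
From mathcomp Require Import fraction.
From mathcomp Require Import reals.
From mathcomp Require Import complex.
From mathcomp Require Import mpoly.

Set Implicit Arguments.
Unset Strict Implicit.
Unset Printing Implicit Defensive.

Import Order.TTheory GRing.Theory Num.Theory.
Local Open Scope ring_scope.

(* Index set {(r,s) | 1 <= s <= r <= n}, stored 0-based: p = (r-1, s-1). *)
Definition Idx (n : nat) := {p : 'I_n * 'I_n | (p.2 <= p.1)%N}.

Definition Ncoord (n : nat) : nat := #|{: Idx n}|.

(* Entry (r,s) of an array indexed by Idx n (1-based r,s); default d
   when (r,s) is out of range. *)
Definition entry (n : nat) (T : Type) (d : T) (v : Idx n -> T) (r s : nat) : T :=
  match [pick x : Idx n | ((val x).1 == r.-1 :> nat) && ((val x).2 == s.-1 :> nat)] with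
  | Some x => v x
  | None => d
  end.

Section Defs.
Variable (R : realType).
Local Notation C := (R[i]).

Definition isNatC (x : C) : Prop := exists m : nat, x = m%:R.
Definition isPosNatC (x : C) : Prop := exists m : nat, x = m.+1%:R.

Definition standard (n : nat) (v : Idx n -> C) : Prop :=
  forall i k : nat, (1 <= i)%N -> (i < k)%N -> (k <= n)%N ->
    isNatC (entry 0 v k i - entry 0 v k.-1 i) /\
    isPosNatC (entry 0 v k.-1 i - entry 0 v k i.+1).

Definition in_Z0 (n : nat) (z : {ffun Idx n -> int}) : Prop :=
  forall x : Idx n, nat_of_ord (val x).1 = n.-1 -> z x = 0%R.

Definition in_std_shift (n : nat) (w : {ffun Idx n -> int}) (v : Idx n -> C) : Prop :=
  exists u : Idx n -> C, standard u /\ v = (fun x => u x - (w x)%:~R).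

Definition S_W (n : nat) (W : seq {ffun Idx n -> int}) (v : Idx n -> C) : Prop :=
  forall w, w \in W -> in_std_shift w v.

(* Polynomials in the variables lambda_{r,s}; variable 'X_i corresponds to
   the coordinate enum_val i : Idx n. *)
Definition polyC_N (n : nat) := {mpoly C[Ncoord n]}.
Definition ratfun (n : nat) := {fraction (polyC_N n)}.

Definition evalP (n : nat) (p : polyC_N n) (v : Idx n -> C) : C :=
  p.@[fun i : 'I_(Ncoord n) => v (enum_val i)].

Definition no_pole_at (n : nat) (F : ratfun n) (v : Idx n -> C) : Prop :=
  exists (p q : polyC_N n), evalP q v != 0 /\ F = FracField.tofrac p / FracField.tofrac q.

(* F(v) = 0 (value computed from any representation regular at v). *)
Definition vanishes_at (n : nat) (F : ratfun n) (v : Idx n -> C) : Prop :=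
  forall (p q : polyC_N n), evalP q v != 0 -> F = FracField.tofrac p / FracField.tofrac q -> evalP p v = 0.

End Defs.

From HB Require Import structures.
From mathcomp Require Import all_boot all_order all_algebra.
From mathcomp Require Import fraction reals complex mpoly.
From mathcomp Require Import zify.

(* S_W is Zariski dense.  Order the coordinates by a rank that increases
   along the chains v_{k-1,i} <= v_{k,i} and v_{k,i+1} < v_{k-1,i} of the
   standardness conditions; then for D >= 2 and t large the point
   v_x = t ^ (D ^ rank x) lies in S_W, since its coordinates are integers
   separated by gaps far larger than the shifts in W.  Writing F = p / q
   with q regular at one such point, p must vanish at all of them, and the
   Kronecker substitution x_i |-> X ^ (D ^ rank i), which is injective on
   monomials of degree < D, turns p into a univariate polynomial with
   infinitely many roots; hence p = 0. *)

Set Implicit Arguments.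
Unset Strict Implicit.
Unset Printing Implicit Defensive.
Import Order.TTheory GRing.Theory Num.Theory.

Lemma expansion_inj D B (c d : nat -> nat) :
  (forall j, c j < D) -> (forall j, d j < D) ->
  \sum_(j < B) c j * D ^ j = \sum_(j < B) d j * D ^ j ->
  forall j, j < B -> c j = d j.
Proof.
elim: B c d => [//|B IH] c d cD dD.
have shift (e : nat -> nat) :
    \sum_(j < B.+1) e j * D ^ j = e 0 + (\sum_(j < B) e j.+1 * D ^ j) * D.
  rewrite big_ord_recl expn0 muln1 big_distrl; congr (_ + _).
  by apply: eq_bigr => j _; rewrite expnS mulnCA mulnC.
rewrite !shift => E.
have D_gt0 : 0 < D by apply: leq_ltn_trans (cD 0).
have c0 : c 0 = d 0.
  by have := congr1 (modn^~ D) E; rewrite !(addnC (_ 0)) !modnMDl !modn_small.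
move: E; rewrite c0 => /addnI /eqP; rewrite eqn_pmul2r // => /eqP E.
by case=> [//|j] jB; apply: (IH (fun i => c i.+1) (fun i => d i.+1)).
Qed.

Lemma sum_digits_inj K D (f : 'I_K -> nat) (a b : 'I_K -> nat) :
  0 < D -> injective f -> (forall i, a i < D) -> (forall i, b i < D) ->
  \sum_i a i * D ^ f i = \sum_i b i * D ^ f i -> a =1 b.
Proof.
move=> D_gt0 f_inj aD bD E.
pose B := \sum_i (f i).+1.
have fB i : f i < B by rewrite /B (bigD1 i) //= ltnS leq_addr.
pose digit (e : 'I_K -> nat) j := \sum_i (f i == j) * e i.
have digit_f e i : digit e (f i) = e i.
  rewrite /digit (bigD1 i) //= eqxx mul1n big1 ?addn0 // => k ki.
  by rewrite (inj_eq f_inj) (negbTE ki).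
have digitD e : (forall i, e i < D) -> forall j, digit e j < D.
  move=> eD j; case: (pickP (fun i => f i == j)) => [i /eqP <-|nf].
    by rewrite digit_f.
  by rewrite /digit big1 // => i _; rewrite nf.
have digitE e : \sum_i e i * D ^ f i = \sum_(j < B) digit e j * D ^ j.
  under [RHS]eq_bigr do rewrite big_distrl.
  rewrite exchange_big; apply: eq_bigr => i _ /=.
  rewrite (bigD1 (Ordinal (fB i))) //= eqxx mul1n big1 ?addn0 // => j ji.
  by rewrite (_ : (f i == j) = false) //; apply: contraNF ji => /eqP fij; apply/eqP/val_inj.
move=> i; rewrite -(digit_f a) -(digit_f b).
by apply: (expansion_inj (digitD a aD) (digitD b bD)) (fB i); rewrite -!digitE.
Qed.

Lemma mnm_le_mdeg K (m : 'X_{1..K}) i : m i <= mdeg m.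
Proof. by rewrite mdegE (bigD1 i) //= leq_addr. Qed.

Section Kronecker.
Variables (K D : nat) (f : 'I_K -> nat).
Hypothesis f_inj : injective f.

Definition kron_exp (m : 'X_{1..K}) : nat := \sum_i m i * D ^ f i.

Local Open Scope ring_scope.

Lemma poly_nat_roots_eq0 (C : numDomainType) (Q : {poly C}) T0 :
  (forall t, (T0 <= t)%N -> root Q t%:R) -> Q = 0.
Proof.
move=> Qroots; apply/eqP; apply: contraT => Q0.
pose rs := [seq (T0 + j)%:R : C | j <- iota 0 (size Q)].
have := @max_poly_roots _ Q rs Q0; rewrite size_map size_iota ltnn; apply.
  by apply/allP => _ /mapP [j _ ->]; rewrite Qroots ?leq_addr.
by rewrite map_inj_uniq ?iota_uniq // => j j' /eqP; rewrite eqr_nat eqn_add2l => /eqP.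
Qed.

Definition kron_poly (C : nzRingType) (p : {mpoly C[K]}) : {poly C} :=
  \sum_(m <- msupp p) p@_m *: 'X^(kron_exp m).

Lemma horner_kron_poly (C : comNzRingType) (p : {mpoly C[K]}) (x : C) :
  (kron_poly p).[x] = p.@[fun i => x ^+ (D ^ f i)].
Proof.
rewrite mevalE horner_sum; apply: eq_bigr => m _.
rewrite hornerZ hornerXn -prodrXr; congr (_ * _); apply: eq_bigr => i _.
by rewrite -exprM mulnC.
Qed.

Lemma kron_exp_inj_msupp (C : nzRingType) (p : {mpoly C[K]}) :
  (msize p <= D)%N -> {in msupp p &, injective kron_exp}.
Proof.
move=> pD m m' mp m'p E.
have digit_lt m0 i : m0 \in msupp p -> (m0 i < D)%N.
  move=> m0p; exact: leq_trans (leq_ltn_trans (mnm_le_mdeg m0 i) (msize_mdeg_lt m0p)) pD.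
apply/mnmP/(sum_digits_inj _ f_inj _ _ E) => [|i|i]; rewrite ?digit_lt //.
by apply: leq_trans pD; apply: leq_trans (msize_mdeg_lt mp).
Qed.

Lemma coef_kron_poly (C : nzRingType) (p : {mpoly C[K]}) m :
  (msize p <= D)%N -> m \in msupp p -> (kron_poly p)`_(kron_exp m) = p@_m.
Proof.
move=> pD mp; rewrite coef_sum (bigD1_seq m) ?msupp_uniq //= coefZ coefXn eqxx mulr1.
rewrite big1_seq ?addr0 // => m' /andP [m'm m'p]; rewrite coefZ coefXn.
by rewrite (inj_in_eq (kron_exp_inj_msupp pD)) // eq_sym (negbTE m'm) mulr0.
Qed.

Lemma kron_poly_eq0 (C : nzRingType) (p : {mpoly C[K]}) :
  (msize p <= D)%N -> (kron_poly p == 0) = (p == 0).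
Proof.
move=> pD; apply/eqP/eqP => [p0|->]; last by rewrite /kron_poly msupp0 big_nil.
apply/mpolyP => m; rewrite mcoeff0; case: (boolP (m \in msupp p)) => [mp|].
  by rewrite -coef_kron_poly // p0 coef0.
by rewrite mcoeff_msupp negbK => /eqP.
Qed.

Lemma mpoly_kronecker_eq0 (C : numDomainType) (p : {mpoly C[K]}) T0 :
  (msize p <= D)%N ->
  (forall t, (T0 <= t)%N -> p.@[fun i => t%:R ^+ (D ^ f i)] = 0) -> p = 0.
Proof.
move=> pD p_roots; apply/eqP; rewrite -(kron_poly_eq0 pD); apply/eqP.
by apply: (poly_nat_roots_eq0 (T0 := T0)) => t tT0; rewrite /root horner_kron_poly p_roots.
Qed.

End Kronecker.

Definition idx_rank n (x : Idx n) : nat := (n - (val x).2) * n.+1 + (val x).1.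

Lemma idx_rank_inj n : injective (@idx_rank n).
Proof.
move=> x y E.
have rank_mod (z : Idx n) : idx_rank z %% n.+1 = (val z).1.
  by rewrite /idx_rank modnMDl modn_small // ltnS ltnW.
have rank_div (z : Idx n) : idx_rank z %/ n.+1 = n - (val z).2.
  by rewrite /idx_rank divnMDl // divn_small ?addn0 // ltnS ltnW.
have e1 := rank_mod x; rewrite E rank_mod in e1.
have e2 := rank_div x; rewrite E rank_div in e2.
apply: val_inj; move: e1 e2; case: (val x) => [r s]; case: (val y) => [r' s'] /= e1 e2.
by congr pair; apply: val_inj => //=; have := ltn_ord s; have := ltn_ord s'; lia.
Qed.

Lemma idx_rank_lt n (x y : Idx n) :
  ((val x).2 < (val y).2)%N || ((val x).2 == (val y).2 :> nat) && ((val y).1 < (val x).1)%N ->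
  (idx_rank y < idx_rank x)%N.
Proof.
rewrite /idx_rank; case/orP => [lt_s | /andP [/eqP -> lt_r]]; last by rewrite ltn_add2l.
have lt_ns : (n - (val y).2 < n - (val x).2)%N by have := ltn_ord (val y).2; lia.
have := leq_mul lt_ns (leqnn n.+1); have := ltn_ord (val y).1; lia.
Qed.

Lemma entry_Idx n T (d : T) (v : Idx n -> T) r s : (s <= r)%N -> (r < n)%N ->
  exists x : Idx n,
    [/\ (val x).1 = r :> nat, (val x).2 = s :> nat & entry d v r.+1 s.+1 = v x].
Proof.
move=> sr rn; pose x : Idx n := exist _ (Ordinal rn, Ordinal (leq_ltn_trans sr rn)) sr.
exists x; split=> //; rewrite /entry; case: pickP => [y /andP [/eqP yr /eqP ys]|]; last first.
  by move/(_ x); rewrite !eqxx.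
congr v; apply: val_inj; move: yr ys; case: (val y) => [r' s'] /= yr ys.
by congr pair; apply: val_inj.
Qed.

Lemma expn_gap t a b c : (c.+1 < t)%N -> (b < a)%N -> (t ^ b + c < t ^ a)%N.
Proof.
move=> ct ba; have t_gt0 : (0 < t)%N by case: t ct.
have tb_gt0 : (0 < t ^ b)%N by rewrite expn_gt0 t_gt0.
have : (t ^ b.+1 <= t ^ a)%N by rewrite leq_pexp2l.
by rewrite expnS; nia.
Qed.

Definition shift_bound n (W : seq {ffun Idx n -> int}) : nat :=
  \max_(w <- W) \max_x `|w x|%N.

Section StandardPoints.
Variable R : realType.
Local Notation C := R[i].
Local Open Scope ring_scope.

Lemma isNatC_int (z : int) : 0 <= z -> isNatC (z%:~R : C).
Proof. by case: z => // m _; exists m. Qed.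

Lemma isPosNatC_int (z : int) : 0 < z -> isPosNatC (z%:~R : C).
Proof. by case: z => [[|m]|] // _; exists m. Qed.

Lemma standard_rank_increasing n (U : Idx n -> int) :
  (forall x y : Idx n, (idx_rank y < idx_rank x)%N -> U y < U x) ->
  standard (fun x => (U x)%:~R : C).
Proof.
move=> U_incr [|i] [|[|k]] // _ ik kn.
have [x1 [r1 s1 ->]] := @entry_Idx n C 0 (fun x => (U x)%:~R) k.+1 i ltac:(lia) ltac:(lia).
have [x2 [r2 s2 ->]] := @entry_Idx n C 0 (fun x => (U x)%:~R) k i ltac:(lia) ltac:(lia).
have [x3 [r3 s3 ->]] := @entry_Idx n C 0 (fun x => (U x)%:~R) k.+1 i.+1 ltac:(lia) ltac:(lia).
rewrite -!intrB; split.
  apply/isNatC_int/ltW; rewrite subr_gt0; apply/U_incr/idx_rank_lt.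
  by rewrite r1 s1 r2 s2 eqxx ltnSn orbT.
apply/isPosNatC_int; rewrite subr_gt0; apply/U_incr/idx_rank_lt.
by rewrite s2 s3 ltnSn.
Qed.

Definition kron_point n (D t : nat) : Idx n -> C := fun x => t%:R ^+ (D ^ idx_rank x).

Lemma kron_point_S_W n (W : seq {ffun Idx n -> int}) D t :
  (1 < D)%N -> ((shift_bound W).*2.+1 < t)%N -> S_W W (kron_point D t).
Proof.
move=> D_gt1 Wt w wW.
have w_le x : (`|w x| <= shift_bound W)%N.
  exact: leq_trans (leq_bigmax x) (leq_bigmax_seq _ wW isT).
pose U x := (t ^ (D ^ idx_rank x))%N%:Z + w x.
exists (fun x => (U x)%:~R); split.
  apply: standard_rank_increasing => x y yx.
  have := expn_gap Wt (_ : (D ^ idx_rank y < D ^ idx_rank x)%N).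
  rewrite ltn_exp2l // => /(_ yx).
  by have := w_le x; have := w_le y; rewrite /U; lia.
by apply: boolp.funext => x; rewrite /U intrD addrK -pmulrn natrX.
Qed.

End StandardPoints.

Section RationalFunctions.
Variable R : realType.
Local Open Scope ring_scope.

Lemma evalP_neq0_poly n (q : polyC_N R n) v : evalP q v != 0 -> q != 0.
Proof. by apply: contraNneq => ->; rewrite /evalP meval0. Qed.

Lemma evalP_numer_eq0 n (F : ratfun R n) (p q : polyC_N R n) v :
  q != 0 -> F = FracField.tofrac p / FracField.tofrac q ->
  no_pole_at F v -> vanishes_at F v -> evalP p v = 0.
Proof.
move=> q0 Fpq [p' [q' [q'v Fpq']]] Fv.
have cross : p * q' = p' * q.
  apply/eqP; rewrite -tofrac_eq !tofracM -eqr_div ?tofrac_eq0 ?(evalP_neq0_poly q'v) //.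
  by rewrite -Fpq -Fpq'.
have := congr1 (fun r => evalP r v) cross.
rewrite /evalP !mevalM -/(evalP p' v) (Fv _ _ q'v Fpq') mul0r => /eqP.
by rewrite mulf_eq0 (negbTE q'v) orbF => /eqP.
Qed.

End RationalFunctions.

Local Open Scope ring_scope.

Theorem mainTheorem1 (R : realType) (n : nat) (W : seq {ffun Idx n -> int})
  (F : ratfun R n) :
  (2 <= n)%N ->
  W != [::] ->
  (forall w, w \in W -> in_Z0 w) ->
  (forall v : Idx n -> R[i], S_W W v -> no_pole_at F v) ->
  (forall v : Idx n -> R[i], S_W W v -> vanishes_at F v) ->
  F = 0.
Proof.
move=> _ _ _ no_pole vanish.
pose T0 := (shift_bound W).*2.+2.
have [p [q [qv Fpq]]] := no_pole _ (kron_point_S_W R (leqnn 2) (leqnn T0)).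
suff p0 : p = 0 by rewrite Fpq p0 tofrac0 mul0r.
have rank_inj : injective (fun i : 'I_(Ncoord n) => idx_rank (enum_val i)).
  by move=> i j /idx_rank_inj /enum_val_inj.
apply: (mpoly_kronecker_eq0 rank_inj (leq_addr 2 (msize p)) (T0 := T0)) => t tT0.
have St := kron_point_S_W R (leq_addl (msize p) 2) tT0.
exact: evalP_numer_eq0 (evalP_neq0_poly qv) Fpq (no_pole _ St) (vanish _ St).
Qed.
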